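(* Let $A$ be an $n\times n$ matrix with a designated set of large positions, and let $(X,Y)$ be a restriction with $|X|\ge1$ that is $q$-good for some $q<1/50$. Then $(X,Y)$ has a $13q$-strong line.
   Context: Let $A=(a_{ij})_{i,j\in[n]}$ with a designated set $L\subseteq[n]\times[n]$ of large positions. A restriction is $(X,Y)$ with $X,Y\subseteq[n]$, $|X|=|Y|$; a generalized diagonal of $A[X,Y]$ is $\{(i,\sigma(i)):i\in X\}$ for a bijection $\sigma:X\to Y$, random meaning uniform $\sigma$; it is good if it contains exactly one large position; $(X,Y)$ is $q$-good if a random generalized diagonal is good with probability $\ge1-q$. For $i\in X$, row $i$ is $p$-strong for $(X,Y)$ if at least $(1-p)|Y|$ of the positions $\{(i,j):j\in Y\}$ are large; column $j\in Y$ is $p$-strong if at least $(1-p)|X|$ of $\{(i,j):i\in X\}$ are large. A $p$-strong line is a $p$-strong row or column. *)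

From HB Require Import structures.
From mathcomp Require Import all_boot all_order all_algebra.
Set Implicit Arguments. Unset Strict Implicit. Unset Printing Implicit Defensive.
Import Order.TTheory GRing.Theory Num.Theory.
Local Open Scope ring_scope.

(* Positions of an n x n matrix: pairs (row, column) in 'I_n * 'I_n.
   The set of large positions is L : {set 'I_n * 'I_n}. *)

(* A bijection sigma : X -> Y is represented canonically by the finite function
   f : 'I_n -> 'I_n that agrees with sigma on X and is the identity off X.
   This gives a one-to-one correspondence between bijections X -> Y and
   the f satisfying [is_bij X Y f]. *)
Definition is_bij n (X Y : {set 'I_n}) (f : {ffun 'I_n -> 'I_n}) : bool :=
  [&& [forall i, (i \notin X) ==> (f i == i)],
      [forall i in X, forall j in X, (f i == f j) ==> (i == j)]
    & (f @: X == Y)].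

Definition bijs n (X Y : {set 'I_n}) : {set {ffun 'I_n -> 'I_n}} :=
  [set f | is_bij X Y f].

Definition good_diag n (L : {set 'I_n * 'I_n}) (X : {set 'I_n})
    (f : {ffun 'I_n -> 'I_n}) : bool :=
  #|[set i in X | (i, f i) \in L]| == 1%N.

Definition q_good (R : realFieldType) n (L : {set 'I_n * 'I_n})
    (X Y : {set 'I_n}) (q : R) : Prop :=
  1 - q <= (#|[set f in bijs X Y | good_diag L X f]|%:R / #|bijs X Y|%:R).

Definition strong_row (R : realFieldType) n (L : {set 'I_n * 'I_n})
    (X Y : {set 'I_n}) (p : R) (i : 'I_n) : Prop :=
  i \in X /\ (1 - p) * #|Y|%:R <= #|[set j in Y | (i, j) \in L]|%:R.

Definition strong_col (R : realFieldType) n (L : {set 'I_n * 'I_n})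
    (X Y : {set 'I_n}) (p : R) (j : 'I_n) : Prop :=
  j \in Y /\ (1 - p) * #|X|%:R <= #|[set i in X | (i, j) \in L]|%:R.

Definition has_strong_line (R : realFieldType) n (L : {set 'I_n * 'I_n})
    (X Y : {set 'I_n}) (p : R) : Prop :=
  (exists i, strong_row L X Y p i) \/ (exists j, strong_col L X Y p j).

From HB Require Import structures.
From mathcomp Require Import all_boot all_order all_algebra all_fingroup.
From mathcomp Require Import ring lra.
Import Order.TTheory GRing.Theory Num.Theory.

Set Implicit Arguments. Unset Strict Implicit. Unset Printing Implicit Defensive.

(* Write m = |X| and, for a good bijection f, let i be the
   unique row of X with (i, f i) large ("pivot") and j = f i.  Let a (resp. b)
   be the number of large positions in row i (resp. column j) besides (i, j).
   The row i is strong as soon as a is large and the column j as soon as b is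
   large; precisely, it suffices to find a good f with
       (m - 1 - a - b) + a b <= 13 q m.                                      (D)
   We bound the sum of the left-hand side over all good f by double counting
   with transpositions:
   - swapping the pivot with a row k such that neither (i, f k) nor (k, j) is
     large yields a bijection without large diagonal entry; at least
     m - 1 - a - b rows k are of this kind;
   - swapping two non-pivot rows k, k' with (k, f k') large, or performing a
     double swap for each of the a b "crossing" pairs, yields a bijection with
     2 or 3 large diagonal entries, from which (f, k, k') is recovered up to
     9 m choices.
   Since good bijections have proportion >= 1 - q, the bijections with 0 or
   2..3 large entries are rare, and elementary real arithmetic gives an
   average of (D) at most 13 q m; some good f achieves (D). *)

Section DependentPairs.
Variables T1 T2 : finType.

Definition dep_pairs (A : {set T1}) (B : T1 -> {set T2}) : {set T1 * T2} :=
  [set p | (p.1 \in A) && (p.2 \in B p.1)].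

Lemma mem_dep_pairs A B p : (p \in dep_pairs A B) = (p.1 \in A) && (p.2 \in B p.1).
Proof. by rewrite inE. Qed.

Lemma card_dep_pairs A B : #|dep_pairs A B| = (\sum_(a in A) #|B a|)%N.
Proof.
rewrite -sum1_card (eq_bigl (fun p : T1 * T2 => (p.1 \in A) && (p.2 \in B p.1)));
  last by move=> p; rewrite inE.
rewrite -(pair_big_dep (fun a => a \in A) (fun a b => b \in B a) (fun _ _ => 1%N)).
by apply: eq_bigr => a _; rewrite sum1_card.
Qed.

End DependentPairs.

Lemma sum_indicator (T : finType) (A : {set T}) (P : pred T) :
  (\sum_(k in A) (P k : nat))%N = #|[set k in A | P k]|.
Proof.
rewrite -sum1_card [RHS]big_mkcond [LHS]big_mkcond; apply: eq_bigr => k _.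
by rewrite inE; case: (k \in A); case: (P k).
Qed.

Lemma card_le_inj (T T' : finType) (S : {set T}) (S' : {set T'}) (phi : T -> T') :
  {in S, forall x, phi x \in S'} -> {in S &, injective phi} -> (#|S| <= #|S'|)%N.
Proof.
move=> phiS injS; rewrite -(card_in_imset injS); apply: subset_leq_card.
by apply/subsetP=> _ /imsetP [x xS ->]; apply: phiS.
Qed.

Section Bijections.
Variables (n : nat) (X Y : {set 'I_n}).
Notation F := {ffun 'I_n -> 'I_n}.

Lemma bij_out (f : F) x : is_bij X Y f -> x \notin X -> f x = x.
Proof. by case/and3P=> /forallP H _ _ xX; move: (H x) => /implyP /(_ xX) /eqP. Qed.

Lemma bij_inj (f : F) : is_bij X Y f -> {in X &, injective f}.
Proof.
case/and3P=> _ /forallP H _ x y xX yX fxy.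
by move: (H x) => /implyP /(_ xX) /forallP /(_ y) /implyP /(_ yX) /implyP
  /(_ (introT eqP fxy)) /eqP.
Qed.

Lemma bij_img (f : F) : is_bij X Y f -> f @: X = Y.
Proof. by case/and3P=> _ _ /eqP. Qed.

Lemma bij_in (f : F) x : is_bij X Y f -> x \in X -> f x \in Y.
Proof. by move=> hb xX; rewrite -(bij_img hb); apply: imset_f. Qed.

Lemma bij_onto (f : F) y : is_bij X Y f -> y \in Y -> exists2 x, x \in X & y = f x.
Proof. by move=> hb; rewrite -(bij_img hb) => /imsetP. Qed.

Definition swap (f : F) (a b : 'I_n) : F := [ffun x => f (tperm a b x)].

Lemma swapE f a b x : swap f a b x = f (tperm a b x).
Proof. by rewrite ffunE. Qed.

(* A swap is undone by repeating it; this makes all our swap maps injective. *)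
Lemma swapK f a b : swap (swap f a b) a b = f.
Proof. by apply/ffunP=> x; rewrite !swapE tpermK. Qed.

Lemma tperm_in a b x : a \in X -> b \in X -> x \in X -> tperm a b x \in X.
Proof. by move=> aX bX xX; case: tpermP. Qed.

Lemma swap_bij f a b : is_bij X Y f -> a \in X -> b \in X -> is_bij X Y (swap f a b).
Proof.
move=> hb aX bX; apply/and3P; split.
- apply/forallP=> x; apply/implyP=> xX; rewrite swapE tpermD ?(bij_out hb) //.
  + by apply/eqP=> ax; move: xX; rewrite -ax aX.
  + by apply/eqP=> ax; move: xX; rewrite -ax bX.
- apply/forallP=> x; apply/implyP=> xX; apply/forallP=> y; apply/implyP=> yX.
  apply/implyP; rewrite !swapE => /eqP /(bij_inj hb).
  by move=> /(_ (tperm_in aX bX xX) (tperm_in aX bX yX)) /perm_inj ->.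
- apply/eqP/setP=> y; apply/imsetP/idP.
  + by case=> x xX ->; rewrite swapE; apply: bij_in (tperm_in aX bX xX).
  + move=> /(bij_onto hb) [x xX ->]; exists (tperm a b x); first exact: tperm_in.
    by rewrite swapE tpermK.
Qed.

Lemma card_bij_image (f : F) i (P : pred 'I_n) : is_bij X Y f -> i \in X ->
  #|[set k in X :\ i | P (f k)]| = #|[set l in Y :\ f i | P l]|.
Proof.
move=> hb iX; rewrite -(card_in_imset (f := f)); last first.
  move=> x y; rewrite !inE => /andP [/andP [_ xX] _] /andP [/andP [_ yX] _].
  exact: bij_inj.
apply: eq_card => y; rewrite [in RHS]inE; apply/imsetP/idP.
- case=> x; rewrite !inE => /andP [/andP [xi xX] Px] ->.
  rewrite Px (bij_in hb xX) !andbT; apply: contraNneq xi => fxi.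
  by rewrite (bij_inj hb xX iX fxi).
- case/andP; rewrite inE => /andP [yi yY] Py; have [x xX yx] := bij_onto hb yY.
  exists x => //; rewrite !inE xX -yx Py !andbT.
  by apply: contraNneq yi => xi; rewrite inE yx xi.
Qed.

End Bijections.

Section DoubleCounting.
Variables (n : nat) (L : {set 'I_n * 'I_n}) (X Y : {set 'I_n}).
(* Default pivot, irrelevant for good bijections. *)
Variable d : 'I_n.
Notation F := {ffun 'I_n -> 'I_n}.

Definition large_rows (f : F) := [set x in X | (x, f x) \in L].

Definition good_bijs := [set f in bijs X Y | good_diag L X f].

Definition empty_bijs := [set f in bijs X Y | large_rows f == set0].
Definition few_bijs := [set f in bijs X Y | (2 <= #|large_rows f| <= 3)%N].

Definition pivot (f : F) := odflt d [pick x in large_rows f].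

Lemma good_bij f : f \in good_bijs -> is_bij X Y f.
Proof. by rewrite !inE => /andP []. Qed.

Lemma large_rows_good f : f \in good_bijs -> large_rows f = [set pivot f].
Proof.
rewrite inE => /andP [_]; rewrite /good_diag -/(large_rows f) => /cards1P [x H].
rewrite /pivot H; case: pickP => [y|]; first by rewrite inE => /eqP ->.
by move=> /(_ x); rewrite inE eqxx.
Qed.

Lemma pivot_large f : f \in good_bijs -> pivot f \in X /\ (pivot f, f (pivot f)) \in L.
Proof.
move=> /large_rows_good H; have : pivot f \in large_rows f by rewrite H set11.
by rewrite inE => /andP [].
Qed.

Lemma pivot_in f : f \in good_bijs -> pivot f \in X.
Proof. by case/pivot_large. Qed.

Lemma pivot_L f : f \in good_bijs -> (pivot f, f (pivot f)) \in L.
Proof. by case/pivot_large. Qed.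

Lemma pivot_uniq f x : f \in good_bijs -> x \in X -> (x, f x) \in L -> x = pivot f.
Proof.
move=> /large_rows_good H xX xL; have : x \in large_rows f by rewrite inE xX.
by rewrite H inE => /eqP.
Qed.

(* Good, empty and few bijections are disjoint classes of bijections. *)
Lemma classes_le_bijs :
  (#|good_bijs| + #|empty_bijs| + #|few_bijs| <= #|bijs X Y|)%N.
Proof.
rewrite /good_bijs /empty_bijs /few_bijs -!sum_indicator -!big_split /= -sum1_card.
apply: leq_sum => f _; rewrite /good_diag -/(large_rows f).
case: (boolP (large_rows f == set0)) => [/eqP ->|ne]; first by rewrite cards0.
have : (0 < #|large_rows f|)%N by rewrite card_gt0.
by case: #|large_rows f| => [|[|k]] //= _; rewrite add0n leq_b1.
Qed.

Definition row_large k := [set l in Y | (k, l) \in L].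
Definition large_cells := dep_pairs X row_large.
Definition large_total := #|large_cells|.

(* The numbers a and b of the strategy: extra large entries in the pivot row
   and in the pivot column. *)
Definition row_extra (f : F) := #|[set l in Y :\ f (pivot f) | (pivot f, l) \in L]|.
Definition col_extra (f : F) := #|[set k in X :\ pivot f | (k, f (pivot f)) \in L]|.

(* Rows k whose swap with the pivot destroys every large diagonal entry. *)
Definition killing_rows (f : F) :=
  [set k in X :\ pivot f | ((pivot f, f k) \notin L) && ((k, f (pivot f)) \notin L)].

(* Pairs of non-pivot rows whose swap creates a second large entry. *)
Definition off_pairs (f : F) :=
  dep_pairs (X :\ pivot f) (fun k => [set k' in X :\ pivot f | (k, f k') \in L]).

Definition cross_pairs (f : F) :=
  setX [set k in X :\ pivot f | (pivot f, f k) \in L]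
       [set k in X :\ pivot f | (k, f (pivot f)) \in L].

Lemma mem_off_pairs f k k' : ((k, k') \in off_pairs f) =
  [&& k \in X :\ pivot f, k' \in X :\ pivot f & (k, f k') \in L].
Proof. by rewrite mem_dep_pairs inE. Qed.

Lemma mem_cross_pairs f k k' : ((k, k') \in cross_pairs f) =
  [&& k \in X :\ pivot f, (pivot f, f k) \in L, k' \in X :\ pivot f
    & (k', f (pivot f)) \in L].
Proof. by rewrite in_setX !inE !andbA. Qed.

(* Few bijections marked by two of their large rows and one row of X; these
   are the targets of the injections for off and cross pairs. *)
Definition marked_few :=
  dep_pairs few_bijs (fun t => setX (setX (large_rows t) (large_rows t)) X).

Lemma card_marked_few : (#|marked_few| <= #|few_bijs| * (9 * #|X|))%N.
Proof.
rewrite card_dep_pairs -sum_nat_const; apply: leq_sum => t.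
rewrite inE => /andP [_ /andP [_ le3]].
by rewrite !cardsX leq_mul2r (leq_mul le3 le3) orbT.
Qed.

Lemma row_large_split f k : f \in good_bijs ->
  #|row_large k| = (((k, f (pivot f)) \in L) : nat)
                   + #|[set l in Y :\ f (pivot f) | (k, l) \in L]|.
Proof.
move=> fG; have jY := bij_in (good_bij fG) (pivot_in fG).
rewrite /row_large (cardsD1 (f (pivot f))) inE jY; congr (_ + _)%N.
by apply: eq_card => l; rewrite !inE andbA.
Qed.

Lemma card_pivot_row f : f \in good_bijs -> #|row_large (pivot f)| = (1 + row_extra f)%N.
Proof. by move=> fG; rewrite (row_large_split _ fG) (pivot_L fG). Qed.

Lemma card_pivot_col f : f \in good_bijs ->
  #|[set k in X | (k, f (pivot f)) \in L]| = (1 + col_extra f)%N.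
Proof.
move=> fG; rewrite (cardsD1 (pivot f)) inE (pivot_in fG) (pivot_L fG).
by congr (_ + _)%N; apply: eq_card => k; rewrite !inE andbA.
Qed.

(* Every non-pivot row is killing unless it meets the pivot row or column. *)
Lemma card_killing_rows f : f \in good_bijs ->
  (#|X| <= #|killing_rows f| + row_extra f + col_extra f + 1)%N.
Proof.
move=> fG; have iX := pivot_in fG.
rewrite (cardsD1 (pivot f) X) iX addnC leq_add2r /row_extra.
rewrite -(card_bij_image (fun l => (pivot f, l) \in L) (good_bij fG) iX).
apply: leq_trans (leq_trans (leq_card_setU _ _) (leq_add (leq_card_setU _ _) (leqnn _))).
apply: subset_leq_card; apply/subsetP=> k; rewrite !inE => /andP [-> ->] /=.
by case: (_ \in L); case: (_ \in L).
Qed.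

(* The large entries outside the pivot row and column are exactly the off pairs
   (read through f). *)
Lemma card_off_pairs f : f \in good_bijs ->
  (#|off_pairs f| + row_extra f + col_extra f + 1)%N = large_total.
Proof.
move=> fG; have iX := pivot_in fG; set i := pivot f; set j := f i.
rewrite /large_total /large_cells /off_pairs !card_dep_pairs (big_setD1 i iX) /=.
have -> : (\sum_(k in X :\ i) #|[set k' in X :\ i | (k, f k') \in L]|
   = \sum_(k in X :\ i) #|[set l in Y :\ j | (k, l) \in L]|)%N.
  by apply: eq_bigr => k _; rewrite (card_bij_image (fun l => (k, l) \in L) (good_bij fG) iX).
have -> : (\sum_(k in X :\ i) #|row_large k| = \sum_(k in X :\ i) (((k, j) \in L) : nat)
   + \sum_(k in X :\ i) #|[set l in Y :\ j | (k, l) \in L]|)%N.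
  by rewrite -big_split /=; apply: eq_bigr => k _; rewrite (row_large_split k fG).
rewrite sum_indicator (card_pivot_row fG) /row_extra /col_extra -/i -/j; ring.
Qed.

Lemma card_cross_pairs f : f \in good_bijs -> #|cross_pairs f| = (row_extra f * col_extra f)%N.
Proof.
move=> fG; rewrite cardsX /row_extra.
by rewrite (card_bij_image (fun l => (pivot f, l) \in L) (good_bij fG) (pivot_in fG)).
Qed.

(* Changing a good f on at most two non-pivot rows creates at most two new
   large entries; so if the pivot and some other row are large, we get a few
   bijection. *)
Lemma few_of_local_change (g f : F) (a b c : 'I_n) : f \in good_bijs -> is_bij X Y g ->
  (forall x, x != pivot f -> x \notin [set a; b] -> g x = f x) ->
  pivot f != c -> pivot f \in large_rows g -> c \in large_rows g -> g \in few_bijs.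
Proof.
move=> fG gb gf ic iL cL; rewrite !inE gb /=; apply/andP; split.
  have : [set pivot f; c] \subset large_rows g.
    by apply/subsetP=> x; rewrite in_set2 => /orP [] /eqP ->.
  by move/subset_leq_card; rewrite cards2 ic.
have sub : large_rows g \subset pivot f |: [set a; b].
  apply/subsetP=> x; rewrite inE => /andP [xX xL]; rewrite in_setU1.
  case: (boolP (x == pivot f)) => //= xi; case: (boolP (x \in [set a; b])) => // xab.
  have fxL : (x, f x) \in L by rewrite -gf.
  by rewrite -(pivot_uniq fG xX fxL) eqxx in xi.
apply: leq_trans (subset_leq_card sub) _.
by rewrite cardsU1 cards2; case: (_ \notin _); case: (_ != _).
Qed.

Lemma swap_killing_empty f k : f \in good_bijs -> k \in killing_rows f ->
  swap f (pivot f) k \in empty_bijs.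
Proof.
move=> fG; rewrite inE => /andP [/setD1P [_ kX] /andP [ikL kjL]].
have iX := pivot_in fG.
rewrite inE [_ \in bijs _ _]inE (swap_bij (good_bij fG) iX kX) /=.
apply/eqP/setP=> x.
rewrite !inE swapE; apply/negbTE; rewrite negb_and.
case: (boolP (x \in X)) => //= xX; case: tpermP => [->|->|xi _] //.
by apply/negP => xL; apply: xi (pivot_uniq fG xX xL).
Qed.

(* The good bijection and the killing row are recovered from the empty
   bijection and the large cell (pivot, f pivot). *)
Lemma sum_killing_rows :
  (\sum_(f in good_bijs) #|killing_rows f| <= #|empty_bijs| * large_total)%N.
Proof.
rewrite -card_dep_pairs /large_total -cardsX.
apply: (@card_le_inj _ _ _ _ (fun p => (swap p.1 (pivot p.1) p.2,
                                        (pivot p.1, p.1 (pivot p.1))))).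
- move=> [f k]; rewrite mem_dep_pairs => /andP [fG kK] /=.
  have iX := pivot_in fG.
  rewrite in_setX swap_killing_empty // mem_dep_pairs iX !inE.
  by rewrite (bij_in (good_bij fG) iX) (pivot_L fG).
- move=> [f k] [f' k']; rewrite !mem_dep_pairs /= => /andP [fG kK] /andP [fG' kK'].
  move=> [E1 E2 E3]; move: kK kK'; rewrite !inE.
  move=> /andP [/andP [_ kX] _] /andP [/andP [_ kX'] _].
  have sb := swap_bij (good_bij fG') (pivot_in fG') kX'.
  have Ek : k = k'.
    by apply: (bij_inj sb kX kX'); rewrite -{1}E1 !swapE !tpermR E3.
  by move: E1; rewrite -Ek -E2 => E1; rewrite -(swapK f (pivot f) k) E1 swapK Ek.
Qed.

(* Swapping the two rows of an off pair (k, k') gives a few bijection in which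
   k is large; we mark it by (k, k, k'). *)
Lemma swap_off_pair_marked f k k' : f \in good_bijs -> (k, k') \in off_pairs f ->
  (swap f k k', (k, k, k')) \in marked_few.
Proof.
move=> fG; rewrite mem_off_pairs => /and3P [/setD1P [ki kX] /setD1P [k'i k'X] kL].
have iL : pivot f \in large_rows (swap f k k').
  by rewrite inE (pivot_in fG) swapE (tpermD ki k'i) (pivot_L fG).
have kL' : k \in large_rows (swap f k k') by rewrite inE kX swapE tpermL.
rewrite mem_dep_pairs /= !in_setX kL' k'X !andbT.
apply: (few_of_local_change (a := k) (b := k') fG (swap_bij (good_bij fG) kX k'X) _ _ iL kL');
  last by rewrite eq_sym.
by move=> x _; rewrite !inE negb_or => /andP [xk xk']; rewrite swapE tpermD // eq_sym.
Qed.

Lemma sum_off_pairs :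
  (\sum_(f in good_bijs) #|off_pairs f| <= #|few_bijs| * (9 * #|X|))%N.
Proof.
rewrite -card_dep_pairs; apply: leq_trans card_marked_few.
apply: (@card_le_inj _ _ _ _ (fun p => (swap p.1 p.2.1 p.2.2, (p.2.1, p.2.1, p.2.2)))).
- by move=> [f [k k']]; rewrite mem_dep_pairs => /andP [fG kP]; apply: swap_off_pair_marked.
- move=> [f [k k']] [f' [l l']] _ _ /= [E1 E2 _ E3].
  by rewrite -(swapK f k k') E1 -E2 -E3 swapK.
Qed.

(* For a cross pair (k, k'), swapping the pivot with k and then k with k'
   gives a few bijection in which the pivot and k' are large; we mark it by
   (pivot, k', k). *)
Lemma swap_cross_pair_marked f k k' : f \in good_bijs -> (k, k') \in cross_pairs f ->
  (swap (swap f (pivot f) k) k k', (pivot f, k', k)) \in marked_few.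
Proof.
move=> fG; rewrite mem_cross_pairs.
move=> /and4P [/setD1P [ki kX] kL /setD1P [k'i k'X] k'L].
have iX := pivot_in fG.
have gb := swap_bij (swap_bij (good_bij fG) iX kX) kX k'X.
have iL : pivot f \in large_rows (swap (swap f (pivot f) k) k k').
  by rewrite inE iX !swapE (tpermD ki k'i) tpermL.
have k'L' : k' \in large_rows (swap (swap f (pivot f) k) k k').
  by rewrite inE k'X !swapE !tpermR.
rewrite mem_dep_pairs /= !in_setX iL k'L' kX !andbT.
apply: (few_of_local_change (a := k) (b := k') fG gb _ _ iL k'L'); last by rewrite eq_sym.
move=> x; rewrite eq_sym !inE negb_or => ix /andP [xk xk'].
by rewrite eq_sym in xk; rewrite eq_sym in xk'; rewrite !swapE (tpermD xk xk') (tpermD ix xk).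
Qed.

Lemma sum_cross_pairs :
  (\sum_(f in good_bijs) #|cross_pairs f| <= #|few_bijs| * (9 * #|X|))%N.
Proof.
rewrite -card_dep_pairs; apply: leq_trans card_marked_few.
apply: (@card_le_inj _ _ _ _ (fun p =>
  (swap (swap p.1 (pivot p.1) p.2.1) p.2.1 p.2.2, (pivot p.1, p.2.2, p.2.1)))).
- by move=> [f [k k']]; rewrite mem_dep_pairs => /andP [fG kP]; apply: swap_cross_pair_marked.
- move=> [f [k k']] [f' [l l']] _ _ /= [E1 E2 E3 E4].
  by rewrite -(swapK f (pivot f) k) -(swapK (swap f (pivot f) k) k k') E1 -E2 -E3 -E4 !swapK.
Qed.

End DoubleCounting.

Section RealArithmetic.
Local Open Scope ring_scope.

Lemma exists_le_average (R : realFieldType) (T : finType) (A : {set T})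
    (F : T -> R) (c : R) :
  A != set0 -> \sum_(x in A) F x <= c * #|A|%:R -> exists2 x, x \in A & F x <= c.
Proof.
case/set0Pn=> x0 x0A sumF.
case: (boolP [exists x in A, F x <= c]) => [/exists_inP [x xA Fx]|/exists_inPn Fgt].
  by exists x.
have : \sum_(x in A) c < \sum_(x in A) F x.
  by apply: ltr_sum => [|x xA]; [apply/hasP; exists x0|rewrite ltNge Fgt].
by rewrite sumr_const -mulr_natr; lra.
Qed.

(* The arithmetic core of the averaging argument: T bijections, G good ones,
   Z empty and N few ones, D and S the sums of (m - 1 - a - b) and of a b over
   good bijections, beta the number of large cells. *)
Lemma defect_sum_arith (R : realFieldType) (q T G Z N m beta D S : R) :
  0 < T -> (1 - q) * T <= G -> G + Z + N <= T -> 0 <= Z -> 0 <= N -> 1 <= m ->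
  q < 1 / 50 -> D <= Z * beta -> G * (beta - m) + D <= N * (9 * m) ->
  S <= N * (9 * m) -> D + S <= 13 * q * m * G.
Proof.
move=> T0 goodT partT Z0 N0 m1 q50 killD offD crossS.
have q0 : 0 <= q by nra.
have G0 : 0 < G by nra.
have rare : 49 * (Z + N) <= 50 * q * G by nra.
have fewN : 49 * N <= G by nra.
have killD' : D * (G + Z) <= Z * m * (9 * N + G).
  have GD : G * D <= Z * (G * beta) by nra.
  have Gbeta : G * beta <= N * (9 * m) + G * m - D by nra.
  nra.
have DZ : D <= 58 / 49 * Z * m.
  have GZ0 : 0 < G + Z by lra.
  rewrite -(ler_pM2r GZ0); apply: le_trans killD' _.
  have Zm0 : 0 <= Z * m by nra.
  nra.
nra.
Qed.

Lemma dense_row_or_col (R : realFieldType) (m p : R) (a b : nat) :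
  m - 1 - a%:R - b%:R + a%:R * b%:R <= p * m ->
  (1 - p) * m <= (1 + a)%:R \/ (1 - p) * m <= (1 + b)%:R.
Proof.
rewrite !natrD; case: a => [|a] small; first by right; rewrite mul0r in small; lra.
left; have b0 : 0 <= b%:R :> R by [].
have a0 : 0 <= a%:R :> R by [].
rewrite -addn1 natrD in small *; nra.
Qed.

End RealArithmetic.

Section SmallDefect.
Local Open Scope ring_scope.
Variables (R : realFieldType) (n : nat) (L : {set 'I_n * 'I_n}) (X Y : {set 'I_n}).
Variable d : 'I_n.
Notation F := {ffun 'I_n -> 'I_n}.

Definition defect (f : F) : R :=
  #|X|%:R - 1 - (row_extra L X Y d f)%:R - (col_extra L X d f)%:R
  + (row_extra L X Y d f)%:R * (col_extra L X d f)%:R.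

Lemma strong_line_of_small_defect (p : R) f : #|X| = #|Y| ->
  f \in good_bijs L X Y -> defect f <= p * #|X|%:R -> has_strong_line L X Y p.
Proof.
move=> XY fG /dense_row_or_col [rowD|colD].
  by left; exists (pivot L X d f); split; [exact: pivot_in fG|rewrite -XY (card_pivot_row d fG)].
right; exists (f (pivot L X d f)); split; last by rewrite (card_pivot_col d fG).
exact: bij_in (good_bij fG) (pivot_in d fG).
Qed.

Lemma exists_small_defect (q : R) : (1 <= #|X|)%N -> q < 1 / 50 ->
  q_good L X Y q -> exists2 f, f \in good_bijs L X Y & defect f <= 13 * q * #|X|%:R.
Proof.
move=> X1 q50 qgood; set m := #|X|.
set G := good_bijs L X Y.
pose a f : R := (row_extra L X Y d f)%:R; pose b f : R := (col_extra L X d f)%:R.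
have T0 : 0 < #|bijs X Y|%:R :> R.
  rewrite ltr0n lt0n; apply: contraTneq qgood => ->; rewrite /q_good invr0 mulr0.
  by lra.
have goodT : (1 - q) * #|bijs X Y|%:R <= #|G|%:R by rewrite -ler_pdivlMr.
have partT : #|G|%:R + #|empty_bijs L X Y|%:R + #|few_bijs L X Y|%:R <= #|bijs X Y|%:R :> R.
  by rewrite -!natrD ler_nat classes_le_bijs.
have killD : \sum_(f in G) (m%:R - 1 - a f - b f)
    <= #|empty_bijs L X Y|%:R * (large_total L X Y)%:R.
  apply: le_trans (_ : \sum_(f in G) (#|killing_rows L X d f|%:R : R) <= _).
    apply: ler_sum => f fG.
    by have := card_killing_rows d fG; rewrite -(ler_nat R) !natrD /a /b; lra.
  by rewrite -natr_sum -natrM ler_nat; apply: sum_killing_rows.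
have offD : #|G|%:R * ((large_total L X Y)%:R - m%:R) + \sum_(f in G) (m%:R - 1 - a f - b f)
    <= #|few_bijs L X Y|%:R * (9 * m%:R).
  rewrite mulrC (mulr_natr _ #|G|) -sumr_const -big_split /=.
  apply: le_trans (_ : \sum_(f in G) (#|off_pairs L X d f|%:R : R) <= _).
    by apply: ler_sum => f fG; rewrite -(card_off_pairs d fG) !natrD /a /b; lra.
  by rewrite -natr_sum -[9 * _]natrM -natrM ler_nat; apply: sum_off_pairs.
have crossS : \sum_(f in G) (a f * b f) <= #|few_bijs L X Y|%:R * (9 * m%:R).
  apply: le_trans (_ : \sum_(f in G) (#|cross_pairs L X d f|%:R : R) <= _).
    by apply: ler_sum => f fG; rewrite (card_cross_pairs d fG) natrM.
  by rewrite -natr_sum -[9 * _]natrM -natrM ler_nat; apply: sum_cross_pairs.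
apply: exists_le_average.
  rewrite -card_gt0 -(ltr0n R); nra.
rewrite [\sum_(f in G) _](eq_bigr (fun f => (m%:R - 1 - a f - b f) + a f * b f)) //.
rewrite big_split /=.
by apply: defect_sum_arith T0 goodT partT _ _ _ q50 killD offD crossS; rewrite ?ler1n.
Qed.

End SmallDefect.

Local Open Scope ring_scope.

Theorem lemma2p16 (R : realFieldType) (n : nat) (L : {set 'I_n * 'I_n})
    (X Y : {set 'I_n}) (q : R) :
  #|X| = #|Y| -> (1 <= #|X|)%N -> q < 1 / 50 ->
  q_good L X Y q ->
  has_strong_line L X Y (13 * q).
Proof.
move=> XY X1 q50 qgood.
have [d _] : exists d, d \in X by apply/card_gt0P.
have [f fG small] := exists_small_defect d X1 q50 qgood.
exact: strong_line_of_small_defect XY fG small.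
Qed.
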